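(* Let $\mathcal{E}_1$ be a finite multiset of real numbers, let $\epsilon\in(0,\tfrac14]$, and let $q(\mathcal{E}_1,\epsilon)$ be the $\lceil(1+|\mathcal{E}_1|)(1-\epsilon)\rceil$-th smallest element of $\mathcal{E}_1$. Let $\mathcal{E}_2$ be the multiset obtained from $\mathcal{E}_1$ by adding $t_l\ge 2$ elements that are less than or equal to $q(\mathcal{E}_1,\epsilon)$ and $t_r\ge t_l$ elements that are strictly greater than $q(\mathcal{E}_1,\epsilon)$. Then $q(\mathcal{E}_2,\epsilon)\ge q(\mathcal{E}_1,\epsilon)$, where $q(\mathcal{E}_2,\epsilon)$ is the $\lceil(1+|\mathcal{E}_2|)(1-\epsilon)\rceil$-th smallest element of $\mathcal{E}_2$.
   Context: Order statistics of multisets are counted with multiplicity; if the rank index $\lceil(1+|\mathcal{E}|)(1-\epsilon)\rceil$ exceeds $|\mathcal{E}|$, $q(\mathcal{E},\epsilon)$ is taken to be $+\infty$. *)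

From mathcomp Require Import all_boot all_order all_algebra.
From mathcomp Require Import reals constructive_ereal.
Set Implicit Arguments. Unset Strict Implicit. Unset Printing Implicit Defensive.
Import Order.TTheory GRing.Theory Num.Theory.
Local Open Scope ring_scope.

(* A finite multiset of reals is represented by a sequence (order irrelevant:
   only the sorted version is used). *)

Definition qrank (R : realType) (E : seq R) (eps : R) : int :=
  Num.ceil ((1 + (size E)%:R) * (1 - eps)).

(* q(E,eps): the qrank-th smallest element of E (1-based, with multiplicity);
   +oo if the rank index exceeds |E| (or is not positive). *)
Definition qeps (R : realType) (E : seq R) (eps : R) : \bar R :=
  let k := qrank E eps in
  if (0 < k) && (k <= (size E)%:Z) then
    ((nth 0 (sort <=%R E) (`|k|%N).-1)%:E)%E
  else (+oo)%E.

(* With n = |E1|, a = |Ll|, b = |Lr| and k1, k2 the two rank indices, b >= a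
   and eps <= 1/2 give (a + b)(1 - eps) >= a, hence k2 >= k1 + a because adding
   an integer commutes with the ceiling.  Fewer than k1 elements of E1 lie
   below q = q(E1, eps), at most a of Ll and none of Lr, so fewer than k2
   elements of E2 do, and the k2-th smallest one is at least q.  If q = +oo,
   the nonempty Lr cannot lie above it. *)
From mathcomp Require Import all_boot all_order all_algebra.
From mathcomp Require Import reals constructive_ereal.
From mathcomp Require Import lra.
Import Order.TTheory GRing.Theory Num.Theory.
Local Open Scope ring_scope.

Section SortedOrderStatistics.
Local Open Scope order_scope.
Context {d : Order.disp_t} {T : orderType d} (x0 : T).
Implicit Types (s : seq T) (q : T).

Lemma sorted_count_lt_nth s j : sorted <=%O s -> (j < size s)%N ->
  (count (< nth x0 s j) s <= j)%N.
Proof.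
move=> s_sorted j_lt; rewrite -[s in count _ s](cat_take_drop j) count_cat.
have -> : count (< nth x0 s j) (drop j s) = 0%N.
  apply/eqP; rewrite -leqn0 leqNgt -has_count; apply/hasPn => x /(nthP x0) [i].
  rewrite size_drop => i_lt <-; rewrite nth_drop -leNgt.
  by apply: (sorted_leq_nth le_trans lexx) => //; rewrite ?inE ?leq_addr // -ltn_subRL.
by rewrite addn0 (leq_trans (count_size _ _)) // size_takel // ltnW.
Qed.

Lemma sorted_le_nth s q j : sorted <=%O s -> (j < size s)%N ->
  (count (< q) s <= j)%N -> q <= nth x0 s j.
Proof.
move=> s_sorted j_lt count_le; rewrite leNgt; apply/negP => nth_lt.
have prefix_lt : all (< q) (take j.+1 s).
  apply/(all_nthP x0) => i; rewrite size_takel // ltnS => i_le.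
  rewrite nth_take ?ltnS //; apply: le_lt_trans nth_lt.
  by apply: (sorted_leq_nth le_trans lexx) => //; rewrite ?inE (leq_ltn_trans i_le).
move: count_le; rewrite -[s in count _ s](cat_take_drop j.+1) count_cat.
by move: prefix_lt; rewrite all_count => /eqP->; rewrite size_takel // ltnNge leq_addr.
Qed.

End SortedOrderStatistics.

Section Quantile.
Context {R : realType}.
Implicit Types (E L M : seq R) (eps : R).

Variant qeps_spec E eps : \bar R -> Type :=
  | QepsFinite m of qrank E eps = m.+1%:Z & (m < size E)%N :
      qeps_spec E eps (nth 0 (sort <=%R E) m)%:E
  | QepsInfinite : qeps_spec E eps +oo.

Lemma qepsP E eps : qeps_spec E eps (qeps E eps).
Proof.
rewrite /qeps; case: ifP => [/andP[]|_]; last exact: QepsInfinite.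
by case rank_eq: (qrank E eps) => [[|m]|] //= _ m_lt; apply: QepsFinite.
Qed.

Lemma qrank_catD E {L M eps} : eps <= 1 / 2 -> (size L <= size M)%N ->
  qrank E eps + (size L)%:Z <= qrank (E ++ L ++ M) eps.
Proof.
move=> eps_le sizeLM; rewrite /qrank -(@intrKceil R (size L)%:Z) -ceilDrz ?intr_int //.
apply: le_ceil; rewrite !size_cat !natrD pmulrn.
have : (size L)%:R <= (size M)%:R :> R by rewrite ler_nat.
have : 0 <= (size L)%:R :> R by [].
nra.
Qed.

End Quantile.

Theorem lemma1 (R : realType) (E1 Ll Lr : seq R) (eps : R) :
  0 < eps -> eps <= 1 / 4 ->
  (2 <= size Ll)%N -> (size Ll <= size Lr)%N ->
  all (fun x => (x%:E <= qeps E1 eps)%E) Ll ->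
  all (fun x => (qeps E1 eps < x%:E)%E) Lr ->
  (qeps E1 eps <= qeps (E1 ++ Ll ++ Lr) eps)%E.
Proof.
move=> _ eps_le Ll_ge2 LlLr.
have eps_le_half : eps <= 1 / 2 by lra.
have rank_le := qrank_catD E1 eps_le_half LlLr.
case: qepsP rank_le => [m1 -> m1_lt|_ _]; last first.
  by case: Lr LlLr => [|x Lr] /=; rewrite ?ltNge ?leey // leqNgt (leq_trans _ Ll_ge2).
case: qepsP => [m2 -> m2_lt|]; last by rewrite leey.
rewrite -PoszD lez_nat addSn ltnS => rank_le.
set q := nth 0 _ m1 => _ /allP Lr_gt; rewrite lee_fin.
have sorted_sort (s : seq R) : sorted <=%R (sort <=%R s).
  by apply: sort_sorted; exact: le_total.
have E1_count : (count (< q)%O E1 <= m1)%N.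
  rewrite -(count_sort <=%R).
  by apply: sorted_count_lt_nth (sorted_sort E1) _; rewrite size_sort.
have Lr_count : count (< q)%O Lr = 0%N.
  rewrite (eq_in_count (a2 := pred0)) ?count_pred0 // => x /Lr_gt.
  by rewrite lte_fin => /ltW; rewrite leNgt => /negbTE.
apply: sorted_le_nth (sorted_sort _) _ _; first by rewrite size_sort.
rewrite count_sort !count_cat Lr_count addn0 (leq_trans _ rank_le) //.
by rewrite leq_add // count_size.
Qed.
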